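(* If a pair $(\mathfrak m,\mathfrak m^* )$ of functions $E\to\mathbb C$ on the edges of the lattice strip is imaginary complexified s-holomorphic (ICSH), then the Clifford-generator-valued discrete 1-form $\mathfrak m(z)\psi(z)\,dz+\mathfrak m^*(z)\psi^*(z)\,d\bar z$ is closed.
   Context: Fix integers $a<0<b$, $C=\{a,\dots,b\}$, $C^*=\{a+\frac12,\dots,b-\frac12\}$. $\tilde V$ has orthonormal basis $(e_\rho)_{\rho\in\{\pm1\}^C}$. For $x'\in C^*$, $\varsigma_{x'}(\rho)$ is $\rho$ with the signs of $\rho_x$, $x<x'$, flipped; $\psi_{x'}e_\rho=\frac{-\rho_{x'-1/2}+i\rho_{x'+1/2}}{\sqrt2}e_{\varsigma_{x'}(\rho)}$, $\psi^*_{x'}e_\rho=\frac{-i\rho_{x'-1/2}+\rho_{x'+1/2}}{\sqrt2}e_{\varsigma_{x'}(\rho)}$; $\mathrm{CliffGen}$ is their complex span. With $\beta=\frac12\log(\sqrt2+1)$: $T_h^{1/2}$ diagonal with entries $\exp(\frac\beta2\sum_{x=a}^{b-1}\rho_x\rho_{x+1})$, $e_\tau^\dagger T_ve_\rho=\exp(\beta\sum_{x=a}^b\rho_x\tau_x)\delta_{\tau_a\rho_a}\delta_{\tau_b\rho_b}$, $T=T_h^{1/2}T_vT_h^{1/2}$ (invertible). The lattice strip has vertices $C\times\mathbb Z\subset\mathbb C$, nearest-neighbour edges $E$ identified with their midpoints (horizontal $x'+iy$, vertical $x+iy'$, $y'\in\mathbb Z+\frac12$), faces with centres $p$; vertical edges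 with $x=a$ ($x=b$) are left (right) boundary edges. The fermions $\psi,\psi^*:E\to\mathrm{CliffGen}$ are the unique functions with $\psi(x'+iy)=T^{-y}\psi_{x'}T^y$, $\psi^*(x'+iy)=T^{-y}\psi^*_{x'}T^y$ on horizontal edges such that for any edges $z_1,z_2$ adjacent to a common vertex $v$ and face $p$, $\psi(z_1)+\frac{i|v-p|}{v-p}\psi^*(z_1)=\psi(z_2)+\frac{i|v-p|}{v-p}\psi^*(z_2)$, and $\psi(L)+i\psi^*(L)=0$, $\psi(R)-i\psi^*(R)=0$ on left/right boundary edges $L,R$. For a discrete contour $\gamma=(w_0,\dots,w_m)$ of vertices with $z_j$ the edge joining $w_{j-1},w_j$, define $\int_\gamma(\mathfrak m\psi\,dz+\mathfrak m^*\psi^*\,d\bar z)=\sum_{j=1}^m\big(\mathfrak m(z_j)\psi(z_j)(w_j-w_{j-1})+\mathfrak m^*(z_j)\psi^*(z_j)\overline{(w_j-w_{j-1})}\big)$. The form is closed if this integral vanishes for every counterclockwise plaquette contour $(w_0,w_1,w_2,w_3,w_4=w_0)$ around a face. The pair $(\mathfrak m,\mathfrak m^* )$ is ICSH if for any edges $z_1,z_2$ adjacent to a common vertex $v$ and face $p$: $\mathfrak m(z_1)-\frac{i|v-p|}{v-p}\mathfrak m^*(z_1)=\mathfrak m(z_2)-\frac{i|v-p|}{v-p}\mathfrak m^*(z_2)$. *)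

From HB Require Import structures.
From mathcomp Require Import all_boot all_order all_algebra.
From mathcomp Require Import complex.
From mathcomp Require Import reals sequences exp.

Set Implicit Arguments.
Unset Strict Implicit.
Unset Printing Implicit Defensive.

Import Order.TTheory GRing.Theory Num.Theory.
Local Open Scope ring_scope.
Local Open Scope complex_scope.

(*  - C = {a,...,b}; the site x in C corresponds to index |x - a| in         *)
(*    'I_(|b-a|.+1).                                                         *)
(*  - a spin configuration rho in {+-1}^C is a finite function               *)
(*    'I_(|b-a|.+1) -> bool  (true = +1, false = -1).                        *)
(*  - operators on V~ are square matrices indexed by 'I_#|spins a b|, the    *)
(*    index i standing for the basis vector e_(enum_val i); the entry        *)
(*    A i j is e_tau^dagger A e_rho with tau = enum_val i, rho = enum_val j. *)
(*  - half-integers x' in C^* are written x' = k + 1/2 with k : int,         *)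
(*    a <= k < b.                                                            *)
(*  - lattice points: vertices (x,y) : int*int stand for x + i y; faces      *)
(*    (k,l) : int*int stand for the centre (k+1/2) + i(l+1/2); edges are     *)
(*    stored by the DOUBLED coordinates (X,Y) of their midpoint, i.e. the    *)
(*    midpoint is (X + iY)/2.                                                *)

Definition spins (a b : int) := {ffun 'I_(`|b - a|%N.+1) -> bool}.

Section Strip.
Variable R : realType.
Variables a b : int.

Notation Cx := R[i].
Notation S := (spins a b).
Definition Op := 'M[Cx]_(#|S|).

(* rho_x as a complex number, x : int (meaningful for a <= x <= b). *)
Definition spin (rho : S) (x : int) : Cx :=
  if rho (inord `|x - a|) then 1 else -1.

Definition spinR (rho : S) (x : int) : R :=
  if rho (inord `|x - a|) then 1 else -1.

Definition op_of (f : S -> S -> Cx) : Op :=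
  \matrix_(i, j) f (enum_val i) (enum_val j).

Definition flip (k : int) (rho : S) : S :=
  [ffun i : 'I_(`|b - a|%N.+1) => if (a + (i : nat)%:Z <= k) then ~~ rho i else rho i].

Definition psi0 (k : int) : Op :=
  op_of (fun tau rho =>
    if tau == flip k rho
    then (- spin rho k + 'i * spin rho (k + 1)) / (Num.sqrt 2)%:C
    else 0).

Definition psi0s (k : int) : Op :=
  op_of (fun tau rho =>
    if tau == flip k rho
    then (- 'i * spin rho k + spin rho (k + 1)) / (Num.sqrt 2)%:C
    else 0).

Definition beta : R := 2^-1 * ln (Num.sqrt 2 + 1).

Definition Th_half : Op :=
  op_of (fun tau rho =>
    if tau == rho
    then (expR (beta / 2 *
            \sum_(j < `|b - a|%N) spinR rho (a + j%:Z) * spinR rho (a + j%:Z + 1)))%:C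
    else 0).

Definition Tv : Op :=
  op_of (fun tau rho =>
    if (spin tau a == spin rho a) && (spin tau b == spin rho b)
    then (expR (beta *
            \sum_(j < `|b - a|%N.+1) spinR rho (a + j%:Z) * spinR tau (a + j%:Z)))%:C
    else 0).

Definition Ttr : Op := Th_half * Tv * Th_half.

(* integer powers T^y (T is invertible) *)
Definition Tpow (y : int) : Op :=
  match y with
  | Posz n => Ttr ^+ n
  | Negz n => invmx (Ttr ^+ n.+1)
  end.

Definition is_vertex (v : int * int) : bool := (a <= v.1) && (v.1 <= b).

Definition is_face (p : int * int) : bool := (a <= p.1) && (p.1 < b).

(* horizontal edges x' + iy (doubled: (2k+1, 2y), a <= k < b) and
   vertical edges x + iy' (doubled: (2x, 2l+1), a <= x <= b) *)
Definition is_hedge (z : int * int) : bool :=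
  [&& odd `|z.1|%N, ~~ odd `|z.2|%N, (2 * a < z.1) & (z.1 < 2 * b)].
Definition is_vedge (z : int * int) : bool :=
  [&& ~~ odd `|z.1|%N, odd `|z.2|%N, (2 * a <= z.1) & (z.1 <= 2 * b)].
Definition is_edge (z : int * int) : bool := is_hedge z || is_vedge z.

Definition is_left_edge (z : int * int) : bool := is_vedge z && (z.1 == 2 * a).
Definition is_right_edge (z : int * int) : bool := is_vedge z && (z.1 == 2 * b).

Definition vpos (v : int * int) : Cx := (v.1)%:~R + 'i * (v.2)%:~R.
Definition fpos (p : int * int) : Cx :=
  ((p.1)%:~R + 2^-1) + 'i * ((p.2)%:~R + 2^-1).
Definition epos (z : int * int) : Cx := ((z.1)%:~R + 'i * (z.2)%:~R) / 2.

(* adjacency: the edge z has v as an endpoint / is a side of face p *)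
Definition adj_ev (z v : int * int) : bool :=
  (absz (z.1 - 2 * v.1)%R + absz (z.2 - 2 * v.2)%R == 1)%N.
Definition adj_ef (z p : int * int) : bool :=
  (absz (z.1 - (2 * p.1 + 1))%R + absz (z.2 - (2 * p.2 + 1))%R == 1)%N.

Definition lam (v p : int * int) : Cx :=
  'i * `|vpos v - fpos p| / (vpos v - fpos p).

Definition fermion_prop (psi psis : int * int -> Op) : Prop :=
  (forall k y : int, a <= k -> k < b ->
     psi (2 * k + 1, 2 * y) = Tpow (- y) * psi0 k * Tpow y /\
     psis (2 * k + 1, 2 * y) = Tpow (- y) * psi0s k * Tpow y) /\
  (forall (z1 z2 v p : int * int),
     is_edge z1 -> is_edge z2 -> is_vertex v -> is_face p ->
     adj_ev z1 v -> adj_ef z1 p -> adj_ev z2 v -> adj_ef z2 p ->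
     psi z1 + lam v p *: psis z1 = psi z2 + lam v p *: psis z2) /\
  (forall z, is_left_edge z -> psi z + 'i *: psis z = 0) /\
  (forall z, is_right_edge z -> psi z - 'i *: psis z = 0).

Definition ICSH (m ms : int * int -> Cx) : Prop :=
  forall (z1 z2 v p : int * int),
    is_edge z1 -> is_edge z2 -> is_vertex v -> is_face p ->
    adj_ev z1 v -> adj_ef z1 p -> adj_ev z2 v -> adj_ef z2 p ->
    m z1 - lam v p * ms z1 = m z2 - lam v p * ms z2.

(* discrete contour integral along (w_0, w_1, ..., w_m); the edge joining
   w_{j-1} and w_j has doubled midpoint coordinates w_{j-1} + w_j *)
Definition form_term (m ms : int * int -> Cx) (psi psis : int * int -> Op)
    (w w' : int * int) : Op :=
  let z := (w.1 + w'.1, w.2 + w'.2) in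
  let dw := vpos w' - vpos w in
  (m z * dw) *: psi z + (ms z * dw^*) *: psis z.

Fixpoint contour_int (m ms : int * int -> Cx) (psi psis : int * int -> Op)
    (w : int * int) (ws : seq (int * int)) : Op :=
  match ws with
  | [::] => 0
  | w' :: ws' => form_term m ms psi psis w w' + contour_int m ms psi psis w' ws'
  end.

Definition face_corners (p : int * int) : seq (int * int) :=
  [:: (p.1, p.2); (p.1 + 1, p.2); (p.1 + 1, p.2 + 1); (p.1, p.2 + 1)].

(* closedness: the integral vanishes along every counterclockwise plaquette
   contour (w_0, ..., w_4 = w_0), for every starting corner *)
Definition closed_form (m ms : int * int -> Cx) (psi psis : int * int -> Op) : Prop :=
  forall p, is_face p -> forall r : nat, (r < 4)%N ->
    let c := rot r (face_corners p) in
    contour_int m ms psi psis (head (0, 0) c) (rcons (behead c) (head (0, 0) c)) = 0.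

End Strip.

From HB Require Import structures.
From mathcomp Require Import all_boot all_order all_algebra.
From mathcomp Require Import complex.
From mathcomp Require Import reals sequences exp.
From mathcomp Require Import ring zify.
Import Order.TTheory GRing.Theory Num.Theory.
Local Open Scope ring_scope.

(* Around a corner v of a face p, put la = i|v - p|/(v - p).  The ICSH relation
   and the fermion relation say that m - la m^* and psi + la psi^* take the same
   value on the two sides of p that meet at v.  Along a side of p, run
   counterclockwise from v to the next corner v' (whose factor is -i la), the
   term m psi dw + m^* psi^* conj(dw) of the form splits as
   dw (1 + i)/2 times the product of these two quantities at v plus
   dw (1 - i)/2 times the product at v'.  Going around p, dw is multiplied by i
   at each corner, so the two coefficients that meet at a corner sum to
   dw (1 - i)/2 + i dw (1 + i)/2 = 0, and the circulation vanishes. *)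

Lemma eq_mod_sqrN1 (R : comPzRingType) (j x y c : R) :
  j ^+ 2 = -1 -> x - y = (j ^+ 2 + 1) * c -> x = y.
Proof. by move=> ->; rewrite addNr mul0r => /eqP; rewrite subr_eq0 => /eqP. Qed.

Lemma closed_sum4_rot {V : zmodType} {x y z w : V} :
  x + (y + (z + (w + 0))) = 0 -> y + (z + (w + (x + 0))) = 0.
Proof. by rewrite !addr0 addrC -!addrA. Qed.

Section CornerDecomposition.
Variables (K : fieldType) (V : lmodType K) (j : K).
Hypotheses (sqr_j : j ^+ 2 = -1) (two_neq0 : 2 != 0 :> K).

Definition corner_product (la mm ms : K) (u us : V) : V :=
  (mm - la * ms) *: (u + la *: us).

Lemma edge_term_split (la dw mm ms : K) (u us : V) :
  (mm * dw) *: u + (ms * (- la ^+ 2 * j * dw)) *: us =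
    (dw * (1 + j) / 2) *: corner_product la mm ms u us +
    (dw * (1 - j) / 2) *: corner_product (- j * la) mm ms u us.
Proof.
rewrite /corner_product !scalerDr !scalerA addrACA -!scalerDl.
congr (_ *: _ + _ *: _).
- by apply: (@eq_mod_sqrN1 _ j _ _ (dw * la * ms / 2) sqr_j); field.
- apply: (@eq_mod_sqrN1 _ j _ _ (- dw * (la * mm + la ^+ 2 * ms * (j - 1)) / 2) sqr_j).
  by field.
Qed.

Lemma turn_coefficients_cancel (dw : K) :
  (j * dw) * (1 + j) / 2 + dw * (1 - j) / 2 = 0.
Proof. by apply: (@eq_mod_sqrN1 _ j _ _ (dw / 2) sqr_j); field. Qed.

Lemma cyclic_edge_sum_eq0 n (la dw dw' mm ms : 'I_n -> K) (u us : 'I_n -> V) :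
    (forall t, la (ordS t) = - j * la t) ->
    (forall t, dw (ordS t) = j * dw t) ->
    (forall t, dw' t = - la t ^+ 2 * j * dw t) ->
    (forall t, mm t - la (ordS t) * ms t = mm (ordS t) - la (ordS t) * ms (ordS t)) ->
    (forall t, u t + la (ordS t) *: us t = u (ordS t) + la (ordS t) *: us (ordS t)) ->
  \sum_t ((mm t * dw t) *: u t + (ms t * dw' t) *: us t) = 0.
Proof.
move=> la_turn dw_turn dw'E mm_corner u_corner.
pose X t := corner_product (la t) (mm t) (ms t) (u t) (us t).
have split_at t : (mm t * dw t) *: u t + (ms t * dw' t) *: us t =
    (dw t * (1 + j) / 2) *: X t + (dw t * (1 - j) / 2) *: X (ordS t).
  by rewrite dw'E edge_term_split /X /corner_product -la_turn mm_corner u_corner.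
rewrite (eq_bigr _ (fun t _ => split_at t)) big_split /=.
rewrite (reindex_inj (can_inj (@ordSK n))) -big_split /=.
by rewrite big1 // => t _; rewrite dw_turn -scalerDl turn_coefficients_cancel scale0r.
Qed.

End CornerDecomposition.

Section CornerFactor.
Context {C : numClosedFieldType}.

Definition corner_factor (d : C) : C := 'i * `|d| / d.

Lemma corner_factor_rot (d : C) :
  d != 0 -> corner_factor ('i * d) = - 'i * corner_factor d.
Proof.
move=> d_neq0; rewrite /corner_factor normrM normCi mul1r.
by apply: (@eq_mod_sqrN1 _ 'i _ _ (`|d| / d) (sqrCi C)); field; rewrite d_neq0 neq0Ci.
Qed.

(* If d = v - p, then (i - 1) d is the side of the face leaving v counterclockwise. *)
Lemma conj_edge_step (d : C) : d != 0 ->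
  (('i - 1) * d)^* = - corner_factor d ^+ 2 * 'i * (('i - 1) * d).
Proof.
move=> d_neq0; rewrite /corner_factor rmorphM /= rmorphB /= conjCi conjC1.
rewrite !exprMn exprVn normCK.
by apply: (@eq_mod_sqrN1 _ 'i _ _ (('i ^+ 2 - 'i - 1) * d^*) (sqrCi C)); field.
Qed.

End CornerFactor.

Definition corner (p : int * int) (t : 'I_4) : int * int :=
  nth (0, 0) (face_corners p) t.

Definition plaquette_edge (p : int * int) (t : 'I_4) : int * int :=
  ((corner p t).1 + (corner p (ordS t)).1, (corner p t).2 + (corner p (ordS t)).2).

Section Plaquette.
Context {R : realType} {a b : int}.

Lemma plaquette_incidence p t : is_face a b p ->
  [/\ is_edge a b (plaquette_edge p t), is_vertex a b (corner p t),
      adj_ev (plaquette_edge p t) (corner p t),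
      adj_ev (plaquette_edge p t) (corner p (ordS t)) & adj_ef (plaquette_edge p t) p].
Proof.
case: p => k l; rewrite /is_face /= => /andP[ak kb].
case: t => [[|[|[|[|//]]]] ?]; rewrite /plaquette_edge /corner /=;
by rewrite /is_edge /is_hedge /is_vedge /is_vertex /adj_ev /adj_ef /=; split; lia.
Qed.

Lemma vpos_sub_fpos_neq0 (v p : int * int) : vpos R v - fpos R p != 0.
Proof.
have twice_diff : 2 * (vpos R v - fpos R p) =
    (2 * (v.1 - p.1) - 1)%:~R + 'i * (2 * (v.2 - p.2) - 1)%:~R.
  by rewrite /vpos /fpos !(intrD, intrB, intrM); field.
apply/eqP => diff0; move: twice_diff; rewrite diff0 mulr0.
move/(congr1 (fun z : R[i] => 'Re z)); rewrite Re_rect ?realz // raddf0.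
by move/eqP; rewrite eq_sym intr_eq0 => /eqP; lia.
Qed.

Lemma corner_rot p t :
  vpos R (corner p (ordS t)) - fpos R p = 'i * (vpos R (corner p t) - fpos R p).
Proof.
apply: (@eq_mod_sqrN1 _ 'i _ _ (p.2%:~R + 2^-1 - (corner p t).2%:~R) (sqrCi _)).
by case: p => k l; case: t => [[|[|[|[|//]]]] ?];
  rewrite /corner /vpos /fpos /= ?intrD; field.
Qed.

Lemma plaquette_sum_eq0 {psi psis : int * int -> Op R a b} {m ms : int * int -> R[i]}
    {p : int * int} :
    fermion_prop psi psis -> ICSH a b m ms -> is_face a b p ->
  \sum_(t < 4) form_term m ms psi psis (corner p t) (corner p (ordS t)) = 0.
Proof.
move=> [_ [psi_corner _]] m_corner face_p.
pose z := plaquette_edge p.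
pose la t := lam R (corner p t) p.
pose dw t := vpos R (corner p (ordS t)) - vpos R (corner p t).
pose d t := vpos R (corner p t) - fpos R p.
have laE t : la t = corner_factor (d t) by [].
have dwE t : dw t = ('i - 1) * d t by rewrite mulrBl mul1r /d -corner_rot /dw; ring.
have corner_eqs t :
    m (z t) - la (ordS t) * ms (z t) = m (z (ordS t)) - la (ordS t) * ms (z (ordS t)) /\
    psi (z t) + la (ordS t) *: psis (z t) = psi (z (ordS t)) + la (ordS t) *: psis (z (ordS t)).
  have [e1 _ _ end1 f1] := plaquette_incidence p t face_p.
  have [e2 v2 start2 _ f2] := plaquette_incidence p (ordS t) face_p.
  by split; [exact: m_corner e1 e2 v2 face_p end1 f1 start2 f2 |
             exact: psi_corner e1 e2 v2 face_p end1 f1 start2 f2].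
have two_neq0 : 2 != 0 :> R[i] by rewrite pnatr_eq0.
apply: (@cyclic_edge_sum_eq0 _ _ 'i (sqrCi _) two_neq0 4 la dw (fun t => (dw t)^*)
  (m \o z) (ms \o z) (psi \o z) (psis \o z)) => t.
- by rewrite !laE /d corner_rot corner_factor_rot ?vpos_sub_fpos_neq0.
- by rewrite !dwE /d corner_rot; ring.
- by rewrite dwE laE conj_edge_step ?vpos_sub_fpos_neq0.
- by case: (corner_eqs t).
- by case: (corner_eqs t).
Qed.

End Plaquette.

Theorem proposition3p8 (R : realType) (a b : int) (ha : a < 0) (hb : 0 < b)
    (psi psis : int * int -> Op R a b) (m ms : int * int -> R[i]) :
  fermion_prop psi psis ->
  ICSH a b m ms ->
  closed_form m ms psi psis.
Proof.
move=> fermion icsh p face_p r r_lt4.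
have := plaquette_sum_eq0 fermion icsh face_p.
rewrite !big_ord_recl big_ord0 /corner /= => sum0.
case: r r_lt4 => [|[|[|[|//]]]] _ /=.
- exact: sum0.
- exact: closed_sum4_rot sum0.
- exact: closed_sum4_rot (closed_sum4_rot sum0).
- exact: closed_sum4_rot (closed_sum4_rot (closed_sum4_rot sum0)).
Qed.
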